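(* The formal power series $f$ and $g$ satisfy $$f(x;u,v,w)=\frac{x-2x^2-wx^3}{1-x}+xg(x;uv,w)+xf(x;1,v,w)+\Big(wx^2+\frac{uvwx}{1-uv}\Big)f(x;1,uv,w)-\frac{u^2v^2wx}{1-uv}f(x;1,1,uvw)$$ and $$(1-x)g(x;v,w)=\frac{x-x^2-wx^3}{1-x}+\Big(wx^2+\frac{vwx}{1-v}\Big)f(x;1,v,w)-\frac{v^2wx}{1-v}f(x;1,1,vw).$$
   Context: An ascent sequence of length $n$ is a sequence $x_1\cdots x_n$ of non-negative integers with $x_1=0$ and $x_i\le \mathrm{asc}(x_1\cdots x_{i-1})+1$ for $1<i\le n$, where $\mathrm{asc}$ counts ascents (indices $j$ with $x_j<x_{j+1}$). It avoids $021$ if there are no $i<j<k$ with $x_i<x_k<x_j$. For $n\ge1$, $0\le s\le r\le m<n$, let $a_{n,m,r,s}$ be the number of $021$-avoiding ascent sequences of length $n$ with exactly $m$ ascents, largest letter $r$ and last letter $s$. Let $A_{n,m}(u,v)=\sum_{r=0}^m\sum_{s=0}^r a_{n,m,r,s}u^sv^r$ and $B_{n,m}(v)=\sum_{r=0}^m a_{n,m,r,r}v^r$; $A_n(u,v,w)=\sum_{m=0}^{n-1}A_{n,m}(u,v)w^m$, $B_n(v,w)=\sum_{m=0}^{n-1}B_{n,m}(v)w^m$; and $f(x;u,v,w)=\sum_{n\ge1}A_n(u,v,w)x^n$, $g(x;v,w)=\sum_{n\ge1}B_n(v,w)x^n$. Thus in $f$, $x$ marks length, $u$ the last letter, $v$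 the largest letter, $w$ the number of ascents. *)

From HB Require Import structures.
From mathcomp Require Import all_boot all_order all_algebra.
Set Implicit Arguments. Unset Strict Implicit. Unset Printing Implicit Defensive.
Import GRing.Theory.

Definition asc (s : seq nat) : nat :=
  count (fun p : nat * nat => p.1 < p.2) (zip s (behead s)).

(* ascent sequence: nonempty, x_1 = 0, and x_i <= asc(x_1..x_{i-1}) + 1 for 1 < i <= n
   (0-based: for 0 < i < size s, nth s i <= asc (take i s) + 1) *)
Definition is_ascent (s : seq nat) : bool :=
  (head 1 s == 0) &&
  [forall i : 'I_(size s), (0 < i) ==> (nth 0 s i <= (asc (take i s)).+1)].

Definition avoids021 (s : seq nat) : bool :=
  [forall i : 'I_(size s), forall j : 'I_(size s), forall k : 'I_(size s),
     ~~ [&& i < j, j < k, nth 0 s i < nth 0 s k & nth 0 s k < nth 0 s j]].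

Definition maxletter (s : seq nat) : nat := foldr maxn 0 s.
Definition lastletter (s : seq nat) : nat := last 0 s.

(* Every ascent sequence of length n has all entries < n, so enumerating
   n-tuples over 'I_n enumerates all ascent sequences of length n. *)
Definition seq_of n (t : n.-tuple 'I_n) : seq nat := map val t.

Local Open Scope ring_scope.

Definition Acoef (R : comRingType) (n : nat) (u v w : R) : R :=
  \sum_(t : n.-tuple 'I_n | is_ascent (seq_of t) && avoids021 (seq_of t))
     u ^+ lastletter (seq_of t) * v ^+ maxletter (seq_of t) * w ^+ asc (seq_of t).

Definition Bcoef (R : comRingType) (n : nat) (v w : R) : R :=
  \sum_(t : n.-tuple 'I_n | [&& is_ascent (seq_of t), avoids021 (seq_of t)
                              & lastletter (seq_of t) == maxletter (seq_of t)])
     v ^+ maxletter (seq_of t) * w ^+ asc (seq_of t).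

Definition pser (R : comRingType) := nat -> R.

Definition ps_add (R : comRingType) (F G : pser R) : pser R := fun n => F n + G n.
Definition ps_scale (R : comRingType) (c : R) (F : pser R) : pser R := fun n => c * F n.
Definition ps_mul (R : comRingType) (F G : pser R) : pser R :=
  fun n => \sum_(i < n.+1) F i * G (n - i)%N.
Definition ps_mono (R : comRingType) (c : R) (k : nat) : pser R :=
  fun n => if n == k then c else 0.
Definition ps_inv1mx (R : comRingType) : pser R := fun _ => 1.
Definition ps_1mx (R : comRingType) : pser R := ps_add (ps_mono 1 0) (ps_mono (-1) 1).

(* f(x;u,v,w) = sum_{n>=1} A_n(u,v,w) x^n ; g(x;v,w) = sum_{n>=1} B_n(v,w) x^n
   (the coefficient of x^0 is 0: there is no ascent sequence of length 0) *)
Definition fser (R : comRingType) (u v w : R) : pser R :=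
  fun n => if n is 0 then 0 else Acoef n u v w.
Definition gser (R : comRingType) (v w : R) : pser R :=
  fun n => if n is 0 then 0 else Bcoef n v w.

(* A 021-avoiding ascent sequence grows letter by letter: the new letter is either 0 or
   lies between the current maximum r and asc + 1, so all such sequences are generated
   from [0].  Appending 0 keeps the largest letter and the number of ascents; appending
   x >= max(r, 1) makes x both the last and the largest letter and creates an ascent
   unless x repeats the last letter.  Summing the resulting geometric series in x yields
   linear recurrences for the coefficients A_n and B_n, and these recurrences are the
   two functional equations read coefficientwise. *)

From mathcomp Require Import all_boot all_order all_algebra.
From mathcomp Require Import zify ring.
Import GRing.Theory.
Set Implicit Arguments. Unset Strict Implicit. Unset Printing Implicit Defensive.

Lemma maxletter_rcons s x : maxletter (rcons s x) = maxn (maxletter s) x.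
Proof. by rewrite /maxletter; elim: s => [|a s IH] /=; rewrite ?maxn0 ?max0n ?IH ?maxnA. Qed.

Lemma lastletter_rcons s x : lastletter (rcons s x) = x.
Proof. exact: last_rcons. Qed.

Lemma leq_maxletter s y : y \in s -> y <= maxletter s.
Proof. by rewrite /maxletter; elim: s => //= a s IH; rewrite inE => /orP[/eqP->|/IH]; lia. Qed.

Lemma lt_maxletter_exists s x : x < maxletter s -> exists2 y, y \in s & x < y.
Proof.
rewrite /maxletter; elim: s => //= a s IH lt_x.
have [lt_xa|le_ax] := ltnP x a; first by exists a; rewrite ?mem_head.
have [|y ys lt_xy] := IH; first lia.
by exists y; rewrite // inE ys orbT.
Qed.

Lemma asc_rcons s x : s != [::] -> asc (rcons s x) = asc s + (lastletter s < x).
Proof.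
case: s => // a t _; rewrite /asc /lastletter.
have -> : zip (rcons (a :: t) x) (behead (rcons (a :: t) x)) =
          rcons (zip (a :: t) t) (last a t, x).
  by elim: t a => //= b t IH a; rewrite IH.
by rewrite -cats1 count_cat /= addn0.
Qed.

Lemma asc_seq1 x : asc [:: x] = 0.
Proof. by []. Qed.

Lemma asc_le_size s : asc s <= (size s).-1.
Proof. by rewrite /asc (leq_trans (count_size _ _)) // size_zip size_behead; lia. Qed.

Lemma is_ascentP s :
  reflect (head 1 s = 0 /\ forall i, 0 < i < size s -> nth 0 s i <= (asc (take i s)).+1)
          (is_ascent s).
Proof.
apply: (iffP andP) => [[/eqP s0 /forallP asc_s]|[s0 asc_s]].
  by split=> // i /andP[i0 lt_is]; move/implyP: (asc_s (Ordinal lt_is)); apply.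
by split; [rewrite s0 | apply/forallP=> i; apply/implyP=> i0; rewrite asc_s ?i0 ?ltn_ord].
Qed.

Lemma avoids021P s :
  reflect (forall i j k, i < j < k -> k < size s ->
             ~~ ((nth 0 s i < nth 0 s k) && (nth 0 s k < nth 0 s j)))
          (avoids021 s).
Proof.
apply: (iffP forallP) => [av i j k /andP[ij jk] ks | av i].
  have is' : i < size s by lia.
  have js : j < size s by lia.
  by have := forallP (forallP (av (Ordinal is')) (Ordinal js)) (Ordinal ks); rewrite /= ij jk.
apply/forallP=> j; apply/forallP=> k; apply/negP=> /and4P[ij jk ik kj].
by have := av i j k; rewrite ij jk ik kj => /(_ isT (ltn_ord k)).
Qed.

Lemma is_ascent_rcons s x :
  s != [::] -> is_ascent (rcons s x) = is_ascent s && (x <= (asc s).+1).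
Proof.
move=> s_nil; have s_pos : 0 < size s by rewrite lt0n size_eq0.
have head_rcons : head 1 (rcons s x) = head 1 s by case: (s) s_nil.
have take_rcons i : i <= size s -> take i (rcons s x) = take i s.
  by move=> le_is; rewrite -cats1 takel_cat.
have take_rcons_size : take (size s) (rcons s x) = s by rewrite take_rcons ?take_size.
apply/is_ascentP/andP; rewrite head_rcons size_rcons => -[s0 asc_sx].
  split.
    apply/is_ascentP; split=> // i /andP[i0 lt_is].
    have := asc_sx i; rewrite i0 ltnS ltnW // nth_rcons lt_is take_rcons ?(ltnW lt_is) //.
    exact.
  by have := asc_sx (size s); rewrite s_pos ltnSn nth_rcons ltnn eqxx take_rcons_size; exact.
case/is_ascentP: s0 => s0 asc_s; split=> // i /andP[i0].
rewrite ltnS leq_eqVlt => /orP[/eqP-> | lt_is].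
  by rewrite nth_rcons ltnn eqxx take_rcons_size.
by rewrite nth_rcons lt_is take_rcons ?(ltnW lt_is) // asc_s ?i0.
Qed.

Lemma avoids021_rcons s x : head 0 s = 0 ->
  avoids021 (rcons s x) = avoids021 s && ((x == 0) || (maxletter s <= x)).
Proof.
move=> s0; have nth_sx i : i < size s -> nth 0 (rcons s x) i = nth 0 s i.
  by move=> lt_is; rewrite nth_rcons lt_is.
have nth_sx_size : nth 0 (rcons s x) (size s) = x by rewrite nth_rcons ltnn eqxx.
apply/avoids021P/andP; rewrite size_rcons; [move=> av_sx | case=> /avoids021P av_s x_ok].
  split.
    apply/avoids021P=> i j k ijk lt_ks; have := av_sx i j k ijk (ltnW lt_ks).
    by rewrite !nth_sx //; lia.
  case: eqP => //= /eqP x_pos; rewrite leqNgt; apply/negP=> /lt_maxletter_exists[y ys lt_xy].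
  have js : index y s < size s by rewrite index_mem.
  have j_pos : 0 < index y s.
    by rewrite lt0n; apply: contraTneq lt_xy => j0; rewrite -(nth_index 0 ys) j0 nth0 s0.
  (* [s] starts with 0, so [0 < x < y] would make [0, y, x] a 021 pattern. *)
  have := av_sx 0 (index y s) (size s); rewrite j_pos js ltnSn nth_sx_size.
  rewrite !nth_sx ?nth_index ?nth0 ?s0 //; [by move=> /(_ isT isT); lia | lia].
move=> i j k /andP[ij jk]; rewrite ltnS leq_eqVlt => /orP[/eqP ek | lt_ks]; last first.
  by rewrite !nth_sx //; [apply: av_s; rewrite ?ij | lia | lia].
have js : j < size s by rewrite -ek.
subst k.
rewrite nth_sx_size !nth_sx //; last lia.
case/orP: x_ok => [/eqP-> | le_max_x]; first by rewrite ltn0.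
by rewrite [x < _]ltnNge (leq_trans (leq_maxletter (mem_nth 0 js)) le_max_x) andbF.
Qed.

Definition ascent021 s := is_ascent s && avoids021 s.

Definition next_letters s := 0 :: index_iota (maxn (maxletter s) 1) (asc s).+2.

Lemma mem_next_letters s x :
  (x \in next_letters s) = ((x == 0) || (maxletter s <= x)) && (x <= (asc s).+1).
Proof. by rewrite inE mem_index_iota; case: eqP => [->|/eqP]; lia. Qed.

Lemma ascent021_seq1 x : ascent021 [:: x] = (x == 0).
Proof.
apply/idP/eqP => [/andP[/andP[/eqP x0 _] _] // | ->].
apply/andP; split; first by apply/is_ascentP; split=> // -[|[|i]].
by apply/avoids021P => i j k /=; lia.
Qed.

Lemma ascent021_neq_nil s : ascent021 s -> s != [::].
Proof. by case: s. Qed.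

Lemma ascent021_rcons s x :
  s != [::] -> ascent021 (rcons s x) = ascent021 s && (x \in next_letters s).
Proof.
move=> s_nil; rewrite /ascent021 is_ascent_rcons // mem_next_letters.
case s_asc: (is_ascent s) => //=.
have s0 : head 0 s = 0 by case/is_ascentP: s_asc; case: (s) s_nil => //= a t _ ->.
by rewrite avoids021_rcons //; case: (avoids021 s); rewrite ?andbF // andbC.
Qed.

Lemma ascent021_shape s : ascent021 s ->
  [/\ maxletter s <= asc s, lastletter s = 0 \/ lastletter s = maxletter s
    & maxletter s = 0 -> asc s = 0].
Proof.
elim/last_ind: s => [|s x IH] //.
have [-> | s_nil] := eqVneq s [::].
  by rewrite ascent021_seq1 => /eqP->; split; [|left|].
rewrite ascent021_rcons // mem_next_letters => /andP[/IH[le_max_asc last_s max0] x_ok].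
rewrite asc_rcons // maxletter_rcons lastletter_rcons; split; lia.
Qed.

Fixpoint ascent021_seqs k : seq (seq nat) :=
  if k is k'.+1 then [seq rcons s x | s <- ascent021_seqs k', x <- next_letters s]
  else [:: [:: 0]].

Lemma ascent021_seqsS k :
  ascent021_seqs k.+1 = [seq rcons s x | s <- ascent021_seqs k, x <- next_letters s].
Proof. by []. Qed.

Lemma mem_ascent021_seqs k s :
  (s \in ascent021_seqs k) = (size s == k.+1) && ascent021 s.
Proof.
elim: k s => [|k IH] s.
  rewrite inE; apply/eqP/andP => [-> | [/eqP]]; first by rewrite ascent021_seq1.
  by case: s => [|a []] //= _; rewrite ascent021_seq1 => /eqP->.
rewrite ascent021_seqsS.
apply/(@allpairsPdep _ (fun=> nat))/andP => [[s' [x [s'_in x_in ->]]] | [size_s]].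
  move: s'_in; rewrite IH size_rcons => /andP[/eqP-> s'_ok].
  by rewrite ascent021_rcons ?s'_ok ?x_in //; case: (s') s'_ok.
case/lastP: s size_s => [|s' x] // /[!size_rcons] /eqP[size_s'].
have s'_nil : s' != [::] by case: (s') size_s'.
rewrite ascent021_rcons // => /andP[s'_ok x_in].
by exists s', x; rewrite IH size_s' eqxx.
Qed.

Lemma uniq_ascent021_seqs k : uniq (ascent021_seqs k).
Proof.
elim: k => // k IH; rewrite ascent021_seqsS.
apply: allpairs_uniq_dep => // [s _ | [s x] [s' x'] _ _ /rcons_inj[-> ->]] //.
by rewrite /= iota_uniq mem_index_iota andbT; lia.
Qed.

Lemma seq_of_inj n : injective (@seq_of n).
Proof. by move=> t1 t2 /(inj_map val_inj)/val_inj. Qed.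

Lemma seq_of_onto k s :
  size s = k.+1 -> {in s, forall x, x <= k} -> exists t : k.+1.-tuple 'I_k.+1, seq_of t = s.
Proof.
move=> size_s le_k.
have size_inord : size (map (@inord k) s) == k.+1 by rewrite size_map size_s.
exists (Tuple size_inord); rewrite /seq_of /= -map_comp map_id_in // => x /le_k.
exact: inordK.
Qed.

Local Open Scope ring_scope.

Lemma sum_ascent021_tuples (V : nmodType) k (G : seq nat -> V) :
  \sum_(t : k.+1.-tuple 'I_k.+1 | ascent021 (seq_of t)) G (seq_of t) =
  \sum_(s <- ascent021_seqs k) G s.
Proof.
rewrite -big_filter -(big_map _ xpredT); apply: perm_big; apply: uniq_perm.
- by rewrite map_inj_uniq ?filter_uniq ?index_enum_uniq //; exact: seq_of_inj.
- exact: uniq_ascent021_seqs.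
move=> s; rewrite mem_ascent021_seqs; apply/mapP/andP => [[t] | [/eqP size_s s_ok]].
  by rewrite mem_filter => /andP[t_ok _] ->; rewrite size_map size_tuple.
have [le_max _ _] := ascent021_shape s_ok.
have [|t t_s] := seq_of_onto size_s => [x /leq_maxletter le_x | ].
  by have := asc_le_size s; rewrite size_s /=; lia.
by exists t; rewrite // mem_filter t_s s_ok mem_index_enum.
Qed.

Lemma sum_ascent021_seqsS (V : nmodType) k (F : seq nat -> V) :
  \sum_(s <- ascent021_seqs k.+1) F s =
  \sum_(s <- ascent021_seqs k) \sum_(x <- next_letters s) F (rcons s x).
Proof. by rewrite ascent021_seqsS big_allpairs_dep. Qed.

Lemma geometric_telescope (R : pzRingType) (q : R) a b : (a <= b)%N ->
  (1 - q) * \sum_(a <= i < b) q ^+ i = q ^+ a - q ^+ b.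
Proof.
move=> le_ab; rewrite mulr_sumr (telescope_sumr_eq (fun i => - q ^+ i)) //.
  by rewrite opprK addrC.
by move=> i _; rewrite exprS mulrBl mul1r opprK addrC.
Qed.

Section Weights.
Variable R : comNzRingType.
Implicit Types (u v w q : R) (s : seq nat).

Definition Aweight u v w s : R := u ^+ lastletter s * v ^+ maxletter s * w ^+ asc s.

Definition Bweight v w s : R :=
  if lastletter s == maxletter s then v ^+ maxletter s * w ^+ asc s else 0.

Lemma Acoef_seqs k u v w :
  Acoef k.+1 u v w = \sum_(s <- ascent021_seqs k) Aweight u v w s.
Proof. exact: sum_ascent021_tuples. Qed.

Lemma Bcoef_seqs k v w :
  Bcoef k.+1 v w = \sum_(s <- ascent021_seqs k) Bweight v w s.
Proof.
rewrite -sum_ascent021_tuples /Bcoef -big_mkcondr.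
by apply: eq_bigl => t; rewrite /ascent021 andbA.
Qed.

Lemma Aweight_rcons0 u v w s : s != [::] -> Aweight u v w (rcons s 0%N) = Aweight 1 v w s.
Proof.
move=> s_nil; rewrite /Aweight lastletter_rcons maxletter_rcons maxn0 asc_rcons //.
by rewrite addn0 !expr1n expr0.
Qed.

Lemma Bweight_rcons0 q w s :
  ascent021 s -> Bweight q w (rcons s 0%N) = (maxletter s == 0%N)%:R.
Proof.
move=> s_ok; have [_ _ max0] := ascent021_shape s_ok.
rewrite /Bweight lastletter_rcons maxletter_rcons maxn0 [0 == _]eq_sym.
case: eqP => // r0; rewrite asc_rcons ?ascent021_neq_nil // max0 // r0.
by rewrite !expr0 mulr1.
Qed.

Lemma Bweight_rcons_ge q w s x : s != [::] -> (maxletter s <= x)%N ->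
  Bweight q w (rcons s x) = q ^+ x * w ^+ (asc s + (lastletter s < x)).
Proof.
move=> s_nil le_max_x; rewrite /Bweight lastletter_rcons maxletter_rcons asc_rcons //.
by rewrite (maxn_idPr le_max_x) eqxx.
Qed.

Lemma Aweight_rcons_ge u v w s x : s != [::] -> (maxletter s <= x)%N ->
  Aweight u v w (rcons s x) = Bweight (u * v) w (rcons s x).
Proof.
move=> s_nil le_max_x; rewrite Bweight_rcons_ge // /Aweight lastletter_rcons maxletter_rcons.
by rewrite asc_rcons // (maxn_idPr le_max_x) exprMn.
Qed.

Lemma sum_Aweight_next u v w s : ascent021 s ->
  \sum_(x <- next_letters s) Aweight u v w (rcons s x) =
  Aweight 1 v w s + \sum_(x <- next_letters s) Bweight (u * v) w (rcons s x)
  - (maxletter s == 0%N)%:R.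
Proof.
move=> s_ok; have s_nil := ascent021_neq_nil s_ok.
rewrite !big_cons Aweight_rcons0 // Bweight_rcons0 //.
rewrite (eq_big_seq (fun x => Bweight (u * v) w (rcons s x))) => [|x]; last first.
  by rewrite mem_index_iota => /andP[le_x _]; apply: Aweight_rcons_ge; lia.
by rewrite addrCA addrC addrK.
Qed.

Lemma sum_Bweight_next q w s : ascent021 s ->
  (1 - q) * \sum_(x <- next_letters s) Bweight q w (rcons s x) =
  (1 - q) * ((1 - w) * Bweight q w s) + w * Aweight 1 q w s
  - q ^+ 2 * w * Aweight 1 1 (q * w) s.
Proof.
move=> s_ok; have s_nil := ascent021_neq_nil s_ok.
have [le_max_asc last_cases max0] := ascent021_shape s_ok.
rewrite big_cons Bweight_rcons0 //.
rewrite (eq_big_seq (fun x => q ^+ x * w ^+ (asc s + (lastletter s < x)))) => [|x]; last first.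
  by rewrite mem_index_iota => /andP[le_x _]; apply: Bweight_rcons_ge; lia.
rewrite /Bweight /Aweight !expr1n !mul1r exprMn.
(* Cases: [s] is all zeros; [s] ends in 0 below a positive maximum; [s] ends in its maximum. *)
have [r0 | r_pos] := posnP (maxletter s).
  have l0 : lastletter s = 0%N by case: last_cases; rewrite ?r0.
  by rewrite r0 l0 max0 // big_nat1 /=; ring.
rewrite (maxn_idPl r_pos) add0r.
case: last_cases => [l0 | lr].
  rewrite l0 (ltn_eqF r_pos).
  rewrite (eq_big_seq (fun x => q ^+ x * w ^+ (asc s).+1)) => [|x]; last first.
    by rewrite mem_index_iota => /andP[le_x _]; rewrite (leq_trans r_pos le_x) addn1.
  rewrite -mulr_suml [LHS]mulrA geometric_telescope; last lia.
  by rewrite !exprS; ring.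
rewrite lr eqxx big_ltn ?ltnn ?addn0; last lia.
rewrite (eq_big_seq (fun x => q ^+ x * w ^+ (asc s).+1)) => [|x]; last first.
  by rewrite mem_index_iota => /andP[lt_x _]; rewrite lt_x addn1.
rewrite -mulr_suml mulrDr [X in _ + X]mulrA geometric_telescope; last lia.
by rewrite !exprS; ring.
Qed.

Lemma sum_next_max0 s : s != [::] ->
  \sum_(x <- next_letters s) (maxletter (rcons s x) == 0%N)%:R = (maxletter s == 0%N)%:R :> R.
Proof.
move=> s_nil; rewrite big_cons maxletter_rcons maxn0 big1_seq ?addr0 // => x /andP[_].
rewrite mem_index_iota maxletter_rcons => /andP[le_x _].
by have /negbTE-> : (maxn (maxletter s) x != 0)%N by lia.
Qed.

Lemma sum_ascent021_seqs_max0 k :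
  \sum_(s <- ascent021_seqs k) (maxletter s == 0%N)%:R = 1 :> R.
Proof.
elim: k => [|k IH]; first by rewrite big_seq1.
rewrite sum_ascent021_seqsS -[RHS]IH !big_seq; apply: eq_bigr => s.
by rewrite mem_ascent021_seqs => /andP[_ /ascent021_neq_nil]; exact: sum_next_max0.
Qed.

Lemma Acoef_succ k u v w :
  Acoef k.+2 u v w = Acoef k.+1 1 v w + Bcoef k.+2 (u * v) w - 1.
Proof.
rewrite -[X in _ - X](sum_ascent021_seqs_max0 k) !Acoef_seqs Bcoef_seqs !sum_ascent021_seqsS.
rewrite -big_split -sumrB /=.
rewrite !big_seq; apply: eq_bigr => s; rewrite mem_ascent021_seqs => /andP[_ s_ok].
exact: sum_Aweight_next.
Qed.

Lemma gserSS q w n :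
  (1 - q) * gser q w n.+2 =
  (1 - q) * ((1 - w) * gser q w n.+1) + w * fser 1 q w n.+1
  - q ^+ 2 * w * fser 1 1 (q * w) n.+1.
Proof.
rewrite /gser /fser /= !Acoef_seqs !Bcoef_seqs sum_ascent021_seqsS.
rewrite !mulr_sumr -big_split -sumrB /=.
rewrite !big_seq; apply: eq_bigr => s; rewrite mem_ascent021_seqs => /andP[_ s_ok].
exact: sum_Bweight_next.
Qed.
End Weights.

Section PowerSeries.
Variable R : comNzRingType.
Implicit Types (F G H : pser R) (u v w q c : R).

Lemma ps_addE F G n : ps_add F G n = F n + G n.
Proof. by []. Qed.

Lemma ps_mulC F G n : ps_mul F G n = ps_mul G F n.
Proof.
rewrite /ps_mul (reindex_inj rev_ord_inj); apply: eq_bigr => i _.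
by rewrite /= subSS subKn ?(leq_ord i) // mulrC.
Qed.

Lemma ps_mulDl F G H n : ps_mul (ps_add F G) H n = ps_mul F H n + ps_mul G H n.
Proof. by rewrite /ps_mul -big_split; apply: eq_bigr => i _; rewrite mulrDl. Qed.

Lemma ps_mulDr F G H n : ps_mul F (ps_add G H) n = ps_mul F G n + ps_mul F H n.
Proof. by rewrite /ps_mul -big_split; apply: eq_bigr => i _; rewrite mulrDr. Qed.

Lemma ps_mul_monoE c j G n :
  ps_mul (ps_mono c j) G n = if (j <= n)%N then c * G (n - j)%N else 0.
Proof.
rewrite /ps_mul /ps_mono; case: leqP => [le_jn | lt_nj].
  rewrite (bigD1 (Ordinal (le_jn : j < n.+1)%N)) //= eqxx big1 ?addr0 // => i ne_ij.
  rewrite (_ : _ == j = false) ?mul0r //.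
  by apply: contraNF ne_ij => /eqP eq_ij; exact/eqP/val_inj.
by rewrite big1 // => i _; rewrite (_ : _ == j = false) ?mul0r //; have := ltn_ord i; lia.
Qed.

Lemma ps_mul_inv1mx_mono c j n :
  ps_mul (ps_inv1mx R) (ps_mono c j) n = if (j <= n)%N then c else 0.
Proof. by rewrite ps_mulC ps_mul_monoE mulr1. Qed.

Definition ps_coefE := (ps_addE, ps_mulDl, ps_mulDr, ps_mul_monoE, ps_mul_inv1mx_mono).

Lemma gser1 v w : gser v w 1 = 1.
Proof. by rewrite /gser Bcoef_seqs big_seq1 /Bweight /= asc_seq1 maxn0 !expr0 mulr1. Qed.

Lemma fserS u v w n : fser u v w n.+1 = fser 1 v w n + gser (u * v) w n.+1 - (0 < n)%:R.
Proof.
case: n => [|n]; last exact: Acoef_succ.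
rewrite gser1 /fser Acoef_seqs big_seq1 /Aweight /= asc_seq1 maxn0.
by rewrite !expr0 !mulr1 add0r subr0.
Qed.
End PowerSeries.

(* Keep [/=] from unfolding series coefficients into [Acoef] and [Bcoef]. *)
Arguments fser : simpl never.
Arguments gser : simpl never.

Lemma gser_identity (R : fieldType) (v w : R) :
  v != 1 ->
  forall n : nat,
  ps_mul (ps_1mx R) (gser v w) n =
  ps_add (ps_mul (ps_inv1mx R)
            (ps_add (ps_mono 1 1) (ps_add (ps_mono (-1) 2) (ps_mono (- w) 3))))
  (ps_add (ps_mul (ps_add (ps_mono w 2) (ps_mono (v * w / (1 - v)) 1)) (fser 1 v w))
          (ps_mul (ps_mono (- (v ^+ 2 * w / (1 - v))) 1) (fser 1 1 (v * w)))) n.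
Proof.
move=> v_neq1 n; have v_unit : 1 - v != 0 by rewrite subr_eq0 eq_sym.
rewrite /ps_1mx !ps_coefE.
case: n => [|[|n]] /=; rewrite ?subSS ?subn0.
- by rewrite /gser /=; ring.
- by rewrite gser1 /gser /fser /=; ring.
have f_n : fser 1 v w n = fser 1 v w n.+1 - gser v w n.+1 + (0 < n)%:R.
  by rewrite fserS mul1r; ring.
apply: (mulfI v_unit); rewrite !ltnS f_n mul1r mulrDr gserSS.
by case: (0 < n)%N => /=; field.
Qed.

Theorem lemma3 (R : fieldType) (u v w : R) :
  (u * v != 1 ->
   forall n : nat,
   fser u v w n =
   ps_add (ps_mul (ps_inv1mx R)
             (ps_add (ps_mono 1 1) (ps_add (ps_mono (-2) 2) (ps_mono (- w) 3))))
   (ps_add (ps_mul (ps_mono 1 1) (gser (u * v) w))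
   (ps_add (ps_mul (ps_mono 1 1) (fser 1 v w))
   (ps_add (ps_mul (ps_add (ps_mono w 2) (ps_mono (u * v * w / (1 - u * v)) 1))
                   (fser 1 (u * v) w))
           (ps_mul (ps_mono (- (u ^+ 2 * v ^+ 2 * w / (1 - u * v))) 1)
                   (fser 1 1 (u * v * w)))))) n)
  /\
  (v != 1 ->
   forall n : nat,
   ps_mul (ps_1mx R) (gser v w) n =
   ps_add (ps_mul (ps_inv1mx R)
             (ps_add (ps_mono 1 1) (ps_add (ps_mono (-1) 2) (ps_mono (- w) 3))))
   (ps_add (ps_mul (ps_add (ps_mono w 2) (ps_mono (v * w / (1 - v)) 1)) (fser 1 v w))
           (ps_mul (ps_mono (- (v ^+ 2 * w / (1 - v))) 1) (fser 1 1 (v * w)))) n).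
Proof.
split=> [uv_neq1 [|n] | ]; last exact: gser_identity.
  by rewrite !ps_coefE /fser /=; ring.
have := gser_identity w uv_neq1 n.+1.
rewrite /ps_1mx fserS !ps_coefE !subSS !subn0 /= mul1r mulN1r => g_succ.
rewrite -[gser (u * v) w n.+1](subrK (gser (u * v) w n)) g_succ !ltnS.
have uv_unit : 1 - u * v != 0 by rewrite subr_eq0 eq_sym.
by case: (0 < n)%N => /=; field.
Qed.
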